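(* For every $F\in\mathbb{N}^d$, $N(F)\le\sqrt{3}^{\,\|F\|}$.
   Context: $\mathbb{N}=\{0,1,2,\dots\}$. A GNS is a submonoid $S\subseteq\mathbb{N}^d$ with finite complement $\mathcal{H}(S)=\mathbb{N}^d\setminus S$. A Frobenius GNS with Frobenius gap $F$ is a GNS such that $F$ is the unique maximal element of $\mathcal{H}(S)$ for the natural partial order. $N(F)$ is the number of Frobenius GNS $S\subseteq\mathbb{N}^d$ with Frobenius gap $F$. $\|F\|=\prod_{i=1}^d(F^{(i)}+1)$. *)

From HB Require Import structures.
From mathcomp Require Import all_boot all_order all_algebra.
From mathcomp Require Export finmap.
Set Implicit Arguments. Unset Strict Implicit. Unset Printing Implicit Defensive.
Import Order.TTheory GRing.Theory Num.Theory.

Local Open Scope fset_scope.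

Definition vec (d : nat) := (d.-tuple nat)%type.

Definition vzero (d : nat) : vec d := [tuple 0%N | i < d].
Definition vadd (d : nat) (x y : vec d) : vec d := [tuple (tnth x i + tnth y i)%N | i < d].
Definition vle (d : nat) (x y : vec d) : bool := [forall i, tnth x i <= tnth y i].
Definition vlt (d : nat) (x y : vec d) : bool := vle x y && (x != y).

(* A GNS S ⊆ N^d with finite complement is encoded by its (finite) set of gaps
   H = H(S); then S = N^d \ H.  S is a submonoid iff 0 ∉ H and S is closed
   under addition. *)
Definition is_GNS (d : nat) (H : {fset vec d}) : Prop :=
  vzero d \notin H /\
  (forall x y : vec d, x \notin H -> y \notin H -> vadd x y \notin H).

Definition unique_maximal (d : nat) (H : {fset vec d}) (F : vec d) : Prop :=
  [/\ F \in H,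
      (forall h, h \in H -> ~~ vlt F h) &
      (forall m, m \in H -> (forall h, h \in H -> ~~ vlt m h) -> m = F)].

Definition Frobenius_GNS (d : nat) (F : vec d) (H : {fset vec d}) : Prop :=
  is_GNS H /\ unique_maximal H F.

Definition normF (d : nat) (F : vec d) : nat := (\prod_(i < d) (tnth F i).+1)%N.

From HB Require Import structures.
From mathcomp Require Import all_boot all_order all_algebra.
From mathcomp Require Import finmap.
From mathcomp Require Import zify.
Import Order.TTheory GRing.Theory Num.Theory.
Set Implicit Arguments. Unset Strict Implicit. Unset Printing Implicit Defensive.

(* Let H be the gap set of a Frobenius GNS with Frobenius gap F.  Every gap
   lies below some maximal gap, hence below F, so H is contained in the box
   B = {x | x <= F}, which has ||F|| points.  The map z |-> F - z is an
   involution of B, and for every z in B one of z, F - z is a gap: otherwise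
   both lie in the monoid, and so does their sum F.  So H is a "pair cover"
   of B for this involution.

   The counting is done for an arbitrary involution sg of a finite set L:
   if s lists distinct pair covers of L, then |s|^2 <= 3^|L|.  Remove an
   orbit {x, sg x} from L and split s by which of x, sg x belong to each
   cover; on each of the (at most three) classes, removing the orbit is
   injective, and induction bounds each class.  A fixed point leaves a
   single class and shrinks L by one; a 2-orbit gives three classes and
   (a+b+c)^2 <= 3(a^2+b^2+c^2) <= 9 * 3^(|L|-2). *)

Local Open Scope fset_scope.
Local Open Scope nat_scope.

Section PairCovers.
Variables (T : choiceType) (sg : T -> T).
Implicit Types (L H : {fset T}) (x z : T) (s : seq {fset T}).

Definition sg_closed L : Prop := forall z, z \in L -> sg z \in L /\ sg (sg z) = z.

Definition pair_cover L H : Prop :=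
  H `<=` L /\ forall z, z \in L -> (z \in H) || (sg z \in H).

Definition drop_orbit x H : {fset T} := H `\ x `\ sg x.

Lemma mem_drop_orbit x H z :
  (z \in drop_orbit x H) = [&& z != sg x, z != x & z \in H].
Proof. by rewrite !in_fsetD1. Qed.

Lemma sg_mem_drop_orbit L x z : sg_closed L -> x \in L ->
  z \in drop_orbit x L -> sg z \in drop_orbit x L.
Proof.
move=> closedL xL; rewrite !mem_drop_orbit => /and3P [zsx zx zL].
have [sxL ssx] := closedL x xL; have [szL ssz] := closedL z zL.
rewrite szL andbT; apply/andP; split.
  by apply: contra zx => /eqP e; rewrite -ssz e ssx.
by apply: contra zsx => /eqP e; rewrite -ssz e.
Qed.

Lemma sg_closed_drop_orbit L x : sg_closed L -> x \in L ->
  sg_closed (drop_orbit x L).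
Proof.
move=> closedL xL z zL'; split; first exact: sg_mem_drop_orbit.
by move: zL'; rewrite mem_drop_orbit => /and3P [_ _ /closedL []].
Qed.

Lemma pair_cover_drop_orbit L H x : sg_closed L -> x \in L ->
  pair_cover L H -> pair_cover (drop_orbit x L) (drop_orbit x H).
Proof.
move=> closedL xL [HL cover]; split.
  apply/fsubsetP => z; rewrite !mem_drop_orbit.
  by case/and3P => -> -> /(fsubsetP HL).
move=> z zL'; have := sg_mem_drop_orbit closedL xL zL'.
move: zL'; rewrite !mem_drop_orbit => /and3P [-> -> zL] /and3P [-> -> _].
exact: cover.
Qed.

Lemma drop_orbit_inj x H1 H2 :
  (x \in H1) = (x \in H2) -> (sg x \in H1) = (sg x \in H2) ->
  drop_orbit x H1 = drop_orbit x H2 -> H1 = H2.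
Proof.
move=> ex esx e; apply/fsetP => z.
have := congr1 (fun A => z \in A) e; rewrite /= !mem_drop_orbit.
case: (eqVneq z (sg x)) => [->|_]; first by [].
by case: (eqVneq z x) => [->|_].
Qed.

Definition in_pattern x (bx bsx : bool) H : bool :=
  ((x \in H) == bx) && ((sg x \in H) == bsx).

Lemma pattern_split x s : (forall H, H \in s -> (x \in H) || (sg x \in H)) ->
  size s = count (in_pattern x true false) s + count (in_pattern x false true) s
           + count (in_pattern x true true) s.
Proof.
elim: s => //= H s IH cover.
rewrite IH => [|H' H's]; last by apply: cover; rewrite inE H's orbT.
rewrite /in_pattern; have := cover H (mem_head _ _).
by case: (x \in H); case: (sg x \in H) => //= _; lia.
Qed.

Lemma pair_cover_count L s : sg_closed L -> uniq s ->
  (forall H, H \in s -> pair_cover L H) -> size s ^ 2 <= 3 ^ #|` L|.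
Proof.
have [n] := ubnP #|` L|; elim: n L s => // n IHn L s ltLn closedL uniq_s covers.
have [L0 | [x xL]] := fset_0Vmem L.
  have : size s <= size [:: fset0 : {fset T}].
    apply: uniq_leq_size => // H /covers [HL _].
    by rewrite inE -fsubset0 -L0.
  by rewrite L0 cardfs0; case: s {uniq_s covers} => [|? []].
set L' := drop_orbit x L.
have [sxL ssx] := closedL x xL.
have card_L : #|` L| = ((sg x != x) + #|` L'|).+1.
  by rewrite (cardfsD1 x) (cardfsD1 (sg x) (L `\ x)) in_fsetD1 xL sxL andbT.
have class_bound bx bsx : count (in_pattern x bx bsx) s ^ 2 <= 3 ^ #|` L'|.
  rewrite -size_filter -(size_map (drop_orbit x)); apply: IHn.
  - by move: ltLn; rewrite card_L; lia.
  - exact: sg_closed_drop_orbit.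
  - rewrite map_inj_in_uniq ?filter_uniq // => H1 H2.
    rewrite !mem_filter /in_pattern => /andP [/andP [/eqP e1 /eqP f1] _].
    move=> /andP [/andP [/eqP e2 /eqP f2] _].
    by apply: drop_orbit_inj; rewrite ?e1 ?e2 ?f1 ?f2.
  - move=> H' /mapP [H]; rewrite mem_filter => /andP [_ /covers covH] ->.
    exact: pair_cover_drop_orbit.
have := pattern_split (fun H Hs => (covers H Hs).2 x xL).
have := class_bound true false; have := class_bound false true.
have := class_bound true true; rewrite card_L.
case: (eqVneq (sg x) x) => [fixed|_] /=.
  have no_split bx : count (in_pattern x bx (~~ bx)) s = 0.
    by apply/eqP; rewrite -leqn0 leqNgt -has_count; apply/hasPn => H _;
      rewrite /in_pattern fixed; case: (x \in H); case: bx.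
  rewrite (no_split true) (no_split false) !add0n => c_bound _ _ ->.
  exact: leq_trans c_bound (leq_pexp2l _ (leqnSn _)).
move=> c_bound b_bound a_bound ->; rewrite add1n !expnS; nia.
Qed.

End PairCovers.

Section Points.
Variable d : nat.
Implicit Types (x y z : vec d) (H : {fset vec d}).

Lemma vle_refl x : vle x x.
Proof. exact/forallP. Qed.

Lemma vle_trans x y z : vle x y -> vle y z -> vle x z.
Proof.
by move=> /forallP le_xy /forallP le_yz; apply/forallP => i; apply: leq_trans (le_yz i).
Qed.

Definition weight x : nat := \sum_(i < d) tnth x i.

Lemma vlt_weight x y : vlt x y -> weight x < weight y.
Proof.
case/andP => /forallP le_xy neq_xy.
have [i lt_i] : exists i, tnth x i < tnth y i.
  apply/existsP; apply: contraNT neq_xy => /existsPn ge_xy.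
  apply/eqP/eq_from_tnth => i; apply/eqP; rewrite eqn_leq le_xy /=.
  by rewrite leqNgt ge_xy.
rewrite /weight (bigD1 i) //= [X in _ < X](bigD1 i) //= -addSn.
by apply: leq_add => //; apply: leq_sum => j _.
Qed.

(* In a finite set every element lies below a maximal element: take one of
   maximal weight among the elements above it. *)
Lemma exists_maximal_above H h : h \in H ->
  exists2 m, m \in H & vle h m /\ (forall h', h' \in H -> ~~ vlt m h').
Proof.
move=> hH.
have [m /= le_hm max_m] := @arg_maxnP H [` hH] (fun m => vle h (val m))
  (fun m => weight (val m)) (vle_refl h).
exists (val m); first exact: valP.
split=> // h' h'H; apply/negP => lt_mh'.
have le_hh' : vle h h' by apply: vle_trans le_hm (proj1 (andP lt_mh')).
by have := max_m [` h'H] le_hh'; rewrite leqNgt vlt_weight.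
Qed.

Lemma gap_le_unique_maximal H F h : unique_maximal H F -> h \in H -> vle h F.
Proof.
case=> _ _ uniq_max hH; have [m mH [le_hm max_m]] := exists_maximal_above hH.
by rewrite -(uniq_max m mH max_m).
Qed.

End Points.

Section Box.
Variables (d : nat) (F : vec d).
Implicit Types (x z : vec d) (H : {fset vec d}).

Definition mirror x : vec d := [tuple tnth F i - tnth x i | i < d].

Lemma vadd_mirror x : vle x F -> vadd x (mirror x) = F.
Proof.
by move/forallP => le_xF; apply: eq_from_tnth => i; rewrite !tnth_mktuple subnKC.
Qed.

Lemma mirror_le x : vle (mirror x) F.
Proof. by apply/forallP => i; rewrite tnth_mktuple leq_subr. Qed.

Lemma mirrorK x : vle x F -> mirror (mirror x) = x.
Proof.
by move/forallP => le_xF; apply: eq_from_tnth => i; rewrite !tnth_mktuple subKn.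
Qed.

Definition box_code := {dffun forall i : 'I_d, 'I_(tnth F i).+1}.

Definition box_point (f : box_code) : vec d := [tuple val (f i) | i < d].

Definition box : {fset vec d} := [fset box_point f | f : box_code].

Lemma mem_box x : (x \in box) = vle x F.
Proof.
apply/imfsetP/forallP => [[f _ ->] i|le_xF].
  by rewrite tnth_mktuple -ltnS ltn_ord.
exists (finfun (fun i => (inord (tnth x i) : 'I_(tnth F i).+1)) : box_code) => //.
by apply: eq_from_tnth => i; rewrite tnth_mktuple ffunE /= inordK // ltnS.
Qed.

Lemma card_box : #|` box| <= normF F.
Proof.
apply: (leq_trans (leq_imfset_card _ _ _)).
rewrite -(card_uniqP (enum_finmem_uniq _)) (leq_trans (max_card _)) //.
rewrite card_dep_ffun foldrE big_map big_enum /=.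
by under eq_bigr do rewrite card_ord.
Qed.

Lemma box_mirror_closed : sg_closed mirror box.
Proof. by move=> z; rewrite !mem_box => le_zF; rewrite mirror_le mirrorK. Qed.

(* The gap set of a Frobenius GNS with Frobenius gap F is a pair cover of
   the box: if z and F - z were both in the monoid, so would be F. *)
Lemma frobenius_pair_cover H : Frobenius_GNS F H -> pair_cover mirror box H.
Proof.
case=> [[_ add_closed] max_F]; have [F_gap _ _] := max_F; split.
  by apply/fsubsetP => h hH; rewrite mem_box (gap_le_unique_maximal max_F hH).
move=> z; rewrite mem_box => le_zF; apply/negPn/negP; rewrite negb_or.
case/andP => zS mzS; have := add_closed _ _ zS mzS.
by rewrite vadd_mirror // F_gap.
Qed.

End Box.

Lemma nat_le_sqrt_pow (R : rcfType) (k m n : nat) :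
  m ^ 2 <= k ^ n -> (m%:R <= Num.sqrt (k%:R : R) ^+ n)%R.
Proof.
move=> bound; have sqrt_ge0 : (0 <= Num.sqrt (k%:R : R))%R := sqrtr_ge0 _.
rewrite -(@ler_pXn2r _ 2) ?nnegrE ?exprn_ge0 ?ler0n //.
by rewrite -exprM mulnC exprM sqr_sqrtr ?ler0n // -!natrX ler_nat.
Qed.

Theorem lemma6p1 (R : rcfType) (d : nat) (F : vec d) :
  forall s : seq {fset vec d},
    uniq s -> (forall H, H \in s -> Frobenius_GNS F H) ->
    ((size s)%:R <= Num.sqrt (3 : R) ^+ normF F)%R.
Proof.
move=> s uniq_s frobenius.
apply: nat_le_sqrt_pow; apply: leq_trans (leq_pexp2l _ (card_box F)) => //.
apply: (pair_cover_count (@box_mirror_closed _ F) uniq_s) => H /frobenius.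
exact: frobenius_pair_cover.
Qed.
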